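(* Let $(\Sigma,\Pi)$ be a first-order signature over a variable system with the de Bruijn property and $T$ a theory over it. Then the Lindenbaum–Tarski structure $\mathcal H_{\Sigma,\Pi,T}=(\mathcal F_\Sigma,\mathrm{Pr}_{\Sigma,\Pi,T},\forall,\exists)$ is a first-order hyperdoctrine over $\mathcal F_\Sigma$, and it has the universal model property: $(\Gamma,\phi)\le(\Gamma,\psi)$ in $\mathrm{Pr}_{\Sigma,\Pi,T}(\Gamma)$ if and only if $(\phi\Rightarrow_\Gamma\psi)\in\mathrm{Thm}(\Sigma,\Pi,T)$.
   Context: Type system: fix an infinite set $V$ of variables with decidable equality and a fresh variable provider: functions $\varphi,\mathsf{fr}$ assigning to each finite $X\subseteq V$ an inhabited $\varphi(X)\subseteq V\setminus X$ and $\mathsf{fr}(X)\in\varphi(X)$; de Bruijn property: $\varphi(X)=\{\mathsf{fr}(X)\}$. Disjoint sets $F$ (function symbols), $T$ (type symbols). Preelements: terms from variables and $F$; pretypes $S(t_1,\ldots,t_n)$, $S\in T$. $\mathrm V(E)$: variables of $E$; $E[\bar a/\bar x]$: simultaneous substitution. Precontext $\Gamma=x_1:A_1,\ldots,x_n:A_n$ with $x_k\in\varphi(\{x_1,\ldots,x_{k-1}\})$, $\mathrm V(A_k)\subseteq\{x_1,\ldots,x_{k-1}\}$; $\mathrm{OV}(\Gamma)=x_1,\ldots,x_n$; $\mathrm{Fresh}(\Gamma)=\varphi(\mathrm V(\Gamma))$, $\mathrm{fresh}(\Gamma)=\mathsf{fr}(\mathrm V(\Gamma))$; $E[\bar a/\Gamma]=E[\bar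 a/x_1,\ldots,x_n]$. Top variables $\mathrm{TV}(\langle\rangle)=\emptyset$, $\mathrm{TV}(\Gamma,x:A)=(\mathrm{TV}(\Gamma)\setminus\mathrm V(A))\cup\{x\}$; a determining sequence is a strictly increasing $\bar i=i_1,\ldots,i_k$ with $\mathrm{TV}(\Gamma)\subseteq\{x_{i_1},\ldots,x_{i_k}\}$, $\bar a_{\bar i}=a_{i_1},\ldots,a_{i_k}$. Declarations $(\Gamma,S,\bar i)$ and $(\Gamma,f,\bar i,U)$ ($\mathrm V(U)\subseteq\mathrm V(\Gamma)$), each symbol at most once. $\mathcal J(\Sigma)$: smallest set of judgements closed under (R1) $\langle\rangle$ context; (R2) $\Gamma$ context, $A$ type $(\Gamma)$ $\Rightarrow$ $\Gamma,x:A$ context ($x\in\mathrm{Fresh}(\Gamma)$); (R3) $x_1:A_1,\ldots,x_n:A_n$ context $\Rightarrow$ $x_i:A_i\ (x_1:A_1,\ldots,x_n:A_n)$; (R4) $(\Gamma,S,\bar i)\in\Sigma$, $\bar a:\Delta\to\Gamma$ $\Rightarrow$ $S(\bar a_{\bar i})$ type $(\Delta)$; (R5) $(\Gamma,f,\bar i,U)\in\Sigma$, $\bar a:\Delta\to\Gamma$, $U[\bar a/\Gamma]$ type $(\Delta)$ $\Rightarrow$ $f(\bar a_{\bar i}):U[\bar a/\Gamma]\ (\Delta)$; where ''$\bar a:\Delta\to\Gamma$'' abbreviates $\Delta$ context, $\Gamma$ context, $a_k:A_k[a_1,\ldots,a_{k-1}/x_1,\ldots,x_{k-1}]\ (\Delta)$.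 $\Sigma$ is a signature if declared contexts are contexts and declared $U$ are types in $\mathcal J(\Sigma)$. Cwf: a category $\mathcal C$ with terminal object; classes $\mathrm{Ty}(\Gamma)$ with functorial substitution $A\{f\}$; context extension $\Gamma.A$ with $\mathrm p(A):\Gamma.A\to\Gamma$; classes $\mathrm{Tm}(\Gamma,A)$ with functorial $a\{f\}\in\mathrm{Tm}(\Delta,A\{f\})$; $\mathrm v_A\in\mathrm{Tm}(\Gamma.A,A\{\mathrm p(A)\})$; $\langle f,a\rangle_A:\Delta\to\Gamma.A$ for $a\in\mathrm{Tm}(\Delta,A\{f\})$ with $\mathrm p(A)\langle f,a\rangle_A=f$, $\mathrm v_A\{\langle f,a\rangle_A\}=a$, $\langle\mathrm p(A)h,\mathrm v_A\{h\}\rangle_A=h$, $\langle f,a\rangle_A g=\langle fg,a\{g\}\rangle_A$; $f.A=\langle f\circ\mathrm p(A\{f\}),\mathrm v_{A\{f\}}\rangle_A:\Delta.A\{f\}\to\Gamma.A$. The cwf $\mathcal F_\Sigma$: objects are contexts $\Gamma$ (i.e. ($\Gamma$ context)$\in\mathcal J(\Sigma)$); morphisms $(\Delta,\Gamma,\bar a)$ with $\bar a:\Delta\to\Gamma$ in $\mathcal J(\Sigma)$, composed by substitution, identity $(\Gamma,\Gamma,\mathrm{OV}(\Gamma))$; $\mathrm{Ty}(\Gamma)=\{(\Gamma,A):(A\text{ type }(\Gamma))\in\mathcal J(\Sigma)\}$, $(\Gamma,A)\{(\Delta,\Gamma,\bar a)\}=(\Delta,A[\bar a/\Gamma])$; $\mathrm{Tm}(\Gamma,(\Gamma,A))=\{((\Gamma,A),a):(a:A\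 (\Gamma))\in\mathcal J(\Sigma)\}$; $\Gamma.(\Gamma,S)=\langle\Gamma,\mathrm{fresh}(\Gamma):S\rangle$, $\mathrm p=(\Gamma.(\Gamma,S),\Gamma,\mathrm{OV}(\Gamma))$, $\mathrm v=((\Gamma.(\Gamma,S),S),\mathrm{fresh}(\Gamma))$, $\langle(\Delta,\Gamma,\bar s),((\Delta,S[\bar s/\Gamma]),b)\rangle=(\Delta,\Gamma.(\Gamma,S),(\bar s,b))$. Heyting (pre)algebra: a preorder $\le$ (not necessarily antisymmetric) with $\top,\bot,\wedge,\vee,\to$ satisfying $\bot\le x\le\top$, $z\le x\wedge y$ iff $z\le x$ and $z\le y$, $x\vee y\le z$ iff $x\le z$ and $y\le z$, $z\le(x\to y)$ iff $z\wedge x\le y$; morphisms are monotone maps preserving the operations and constants. A first-order hyperdoctrine over a cwf $\mathcal C$ is $(\mathcal C,\mathrm{Pr},\forall,\exists)$ with $\mathrm{Pr}:\mathcal C^{\mathrm{op}}\to\mathrm{Heyting}$ a functor ($R\{f\}=\mathrm{Pr}(f)(R)$) and, for $S\in\mathrm{Ty}(\Gamma)$, monotone $\forall_S,\exists_S:\mathrm{Pr}(\Gamma.S)\to\mathrm{Pr}(\Gamma)$ with $Q\le\forall_S(R)$ iff $Q\{\mathrm p(S)\}\le R$, and $\exists_S(R)\le Q$ iff $R\le Q\{\mathrm p(S)\}$ ($Q\in\mathrm{Pr}(\Gamma)$, $R\in\mathrm{Pr}(\Gamma.S)$), and for $f:\Delta\to\Gamma$: $\forall_S(R)\{f\}=\forall_{S\{f\}}(R\{f.S\})$,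 $\exists_S(R)\{f\}=\exists_{S\{f\}}(R\{f.S\})$. Logic: predicate symbols from a set $P$ disjoint from $F\cup T$; a predicate declaration is $(\Gamma,\bar i,R)$ with ($\Gamma$ context)$\in\mathcal J(\Sigma)$, $\bar i$ determining, $R\in P$; a predicate signature $\Pi$ declares each symbol at most once. $\mathrm{Form}(\Sigma,\Pi)$ is the smallest set of judgements ''$\phi$ form $(\Gamma)$'' with: $R(\bar a_{\bar i})$ form $(\Delta)$ for $(\Gamma,\bar i,R)\in\Pi$ and $\bar a:\Delta\to\Gamma$ in $\mathcal J(\Sigma)$; $\bot,\top$ form $(\Gamma)$ for contexts $\Gamma$; $(\phi\circ\psi)$ form $(\Gamma)$ for $\circ\in\{\wedge,\vee,\to\}$ from $\phi,\psi$ form $(\Gamma)$; $(Qx:A)\phi$ form $(\Gamma)$ for $Q\in\{\forall,\exists\}$ from $\phi$ form $(\Gamma,x:A)$ (with $(A\text{ type }(\Gamma))\in\mathcal J(\Sigma)$). Capture-avoiding substitution for $\bar a:\Delta\to\Gamma$: $\phi\{(\Delta,\Gamma,\bar a)\}=\phi[\bar a/\Gamma]$ for atomic $\phi$; it commutes with $\top,\bot,\wedge,\vee,\to$; and $((Qx:A)\theta)\{(\Delta,\Gamma,\bar a)\}=(Qy:A[\bar a/\Gamma])\,\theta\{(\langle\Delta,y:A[\bar a/\Gamma]\rangle,\langle\Gamma,x:A\rangle,(\bar a,y))\}$ with $y=\mathrm{fresh}(\Delta)$. A sequent is $\phi\Rightarrow_\Gamma\psi$ with $\phi,\psi$ form $(\Gamma)$;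 a theory is a set of sequents. Write $\mathbf p_\Gamma(x:A)=(\langle\Gamma,x:A\rangle,\Gamma,\mathrm{OV}(\Gamma))$. $\mathrm{Thm}(\Sigma,\Pi,T)$ is the smallest set of sequents containing $T$ and closed under: $\phi\Rightarrow_\Gamma\phi$; cut (from $\phi\Rightarrow_\Gamma\theta$, $\theta\Rightarrow_\Gamma\psi$ infer $\phi\Rightarrow_\Gamma\psi$); $\theta\wedge\psi\Rightarrow_\Gamma\theta$, $\theta\wedge\psi\Rightarrow_\Gamma\psi$, from $\phi\Rightarrow_\Gamma\theta$, $\phi\Rightarrow_\Gamma\psi$ infer $\phi\Rightarrow_\Gamma\theta\wedge\psi$, $\phi\Rightarrow_\Gamma\top$; $\theta\Rightarrow_\Gamma\theta\vee\psi$, $\psi\Rightarrow_\Gamma\theta\vee\psi$, from $\theta\Rightarrow_\Gamma\phi$, $\psi\Rightarrow_\Gamma\phi$ infer $\theta\vee\psi\Rightarrow_\Gamma\phi$, $\bot\Rightarrow_\Gamma\phi$; $\theta\wedge\psi\Rightarrow_\Gamma\phi$ iff $\theta\Rightarrow_\Gamma\psi\to\phi$ (both directions as rules); $\phi\{\mathbf p_\Gamma(x:A)\}\Rightarrow_{\Gamma,x:A}\psi$ iff $\phi\Rightarrow_\Gamma(\forall x:A)\psi$ (both directions); $\psi\Rightarrow_{\Gamma,x:A}\phi\{\mathbf p_\Gamma(x:A)\}$ iff $(\exists x:A)\psi\Rightarrow_\Gamma\phi$ (both directions); and substitution: from $\phi\Rightarrow_\Gamma\psi$ and $\bar a:\Delta\to\Gamma$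 in $\mathcal J(\Sigma)$ infer $\phi\{(\Delta,\Gamma,\bar a)\}\Rightarrow_\Delta\psi\{(\Delta,\Gamma,\bar a)\}$. Lindenbaum–Tarski structure: $\mathrm{Pr}_{\Sigma,\Pi,T}(\Gamma)=\{(\Gamma,\phi):(\phi\text{ form }(\Gamma))\in\mathrm{Form}(\Sigma,\Pi)\}$ ordered by $(\Gamma,\phi)\le(\Gamma,\psi)$ iff $(\phi\Rightarrow_\Gamma\psi)\in\mathrm{Thm}(\Sigma,\Pi,T)$, with Heyting operations given by the connectives; $\mathrm{Pr}((\Delta,\Gamma,\bar a))(\Gamma,\phi)=(\Delta,\phi\{(\Delta,\Gamma,\bar a)\})$; $\forall_{(\Gamma,A)}(\langle\Gamma,x:A\rangle,\psi)=(\Gamma,(\forall x:A)\psi)$ and $\exists_{(\Gamma,A)}(\langle\Gamma,x:A\rangle,\psi)=(\Gamma,(\exists x:A)\psi)$. *)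

From mathcomp Require Import all_boot.
Set Implicit Arguments. Unset Strict Implicit. Unset Printing Implicit Defensive.

(* V : variables (decidable equality); Fsym, Tsym, Psym : function, type   *)
(* and predicate symbols (disjoint by being distinct types).  Finite sets  *)
(* of variables are represented by lists; vphi X is the set phi(X) (as a   *)
(* predicate) and vfr X = fr(X).                                           *)
Record lang := Lang {
  V : eqType;
  Fsym : Type;
  Tsym : Type;
  Psym : Type;
  vphi : seq V -> V -> Prop;
  vfr : seq V -> V
}.

Definition fresh_provider (L : lang) : Prop :=
  (forall X : seq (V L), exists v, v \notin X) /\
  (forall X Y : seq (V L), X =i Y ->                               (* functions of finite SETS *)
      (forall v, @vphi L X v <-> @vphi L Y v) /\ @vfr L X = @vfr L Y) /\
  (forall X v, @vphi L X v -> v \notin X) /\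
  (forall X, @vphi L X (@vfr L X)).

Definition de_bruijn (L : lang) : Prop :=
  forall X v, @vphi L X v <-> v = @vfr L X.

Section Syntax.
Variable L : lang.

Inductive term : Type :=
| tvar (x : V L)
| tapp (f : Fsym L) (args : seq term).

Inductive pretype : Type := ptype (S : Tsym L) (args : seq term).

Fixpoint tvars (t : term) : seq (V L) :=
  match t with
  | tvar x => [:: x]
  | tapp _ ts => (fix go (ts : seq term) : seq (V L) :=
                   match ts with [::] => [::] | t :: ts' => tvars t ++ go ts' end) ts
  end.

Definition ptvars (A : pretype) : seq (V L) :=
  let: ptype _ ts := A in flatten (map tvars ts).

Fixpoint tsubst (xs : seq (V L)) (as_ : seq term) (t : term) : term :=
  match t with
  | tvar x => if x \in xs then nth (tvar x) as_ (index x xs) else tvar x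
  | tapp f ts => tapp f (map (tsubst xs as_) ts)
  end.

Definition psubst (xs : seq (V L)) (as_ : seq term) (A : pretype) : pretype :=
  let: ptype S0 ts := A in ptype S0 (map (tsubst xs as_) ts).

Definition ctx := seq (V L * pretype).

Definition OV (G : ctx) : seq (V L) := map fst G.
Definition ctx_vars (G : ctx) : seq (V L) := flatten (map (fun p => p.1 :: ptvars p.2) G).
Definition Fresh (G : ctx) : V L -> Prop := @vphi L (ctx_vars G).
Definition fresh (G : ctx) : V L := @vfr L (ctx_vars G).
Definition idm (G : ctx) : seq term := map tvar (OV G).

Definition is_precontext (G : ctx) : Prop :=
  forall k x A, onth G k = Some (x, A) ->
    @vphi L (take k (OV G)) x /\ {subset ptvars A <= take k (OV G)}.

Definition TV (G : ctx) : seq (V L) :=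
  foldl (fun acc p => rcons [seq y <- acc | y \notin ptvars p.2] p.1) [::] G.

(* selection a_{i_1}, ..., a_{i_k}  (indices are 0-based) *)
Definition sel {X : Type} (ix : seq nat) (s : seq X) : seq X := pmap (onth s) ix.

Definition determining (G : ctx) (ix : seq nat) : Prop :=
  sorted ltn ix /\ all (fun i => i < size G) ix /\
  {subset TV G <= sel ix (OV G)}.

Inductive judg : Type :=
| JCtx (G : ctx)
| JTy (G : ctx) (A : pretype)
| JTm (G : ctx) (a : term) (A : pretype).

(* a signature: each symbol declared at most once (partial functions) *)
Record signature := Signature {
  sdecl : Tsym L -> option (ctx * seq nat);
  fdecl : Fsym L -> option (ctx * seq nat * pretype)
}.

Inductive J (Sg : signature) : judg -> Prop :=
| R1 : J Sg (JCtx [::])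
| R2 G A x : J Sg (JCtx G) -> J Sg (JTy G A) -> Fresh G x -> J Sg (JCtx (rcons G (x, A)))
| R3 G i x A : J Sg (JCtx G) -> onth G i = Some (x, A) -> J Sg (JTm G (tvar x) A)
| R4 S0 G ix D as_ : sdecl Sg S0 = Some (G, ix) ->
    J Sg (JCtx D) -> J Sg (JCtx G) -> size as_ = size G ->
    (forall k a x A, onth as_ k = Some a -> onth G k = Some (x, A) ->
        J Sg (JTm D a (psubst (take k (OV G)) (take k as_) A))) ->
    J Sg (JTy D (ptype S0 (sel ix as_)))
| R5 f G ix U D as_ : fdecl Sg f = Some (G, ix, U) ->
    J Sg (JCtx D) -> J Sg (JCtx G) -> size as_ = size G ->
    (forall k a x A, onth as_ k = Some a -> onth G k = Some (x, A) ->
        J Sg (JTm D a (psubst (take k (OV G)) (take k as_) A))) ->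
    J Sg (JTy D (psubst (OV G) as_ U)) ->
    J Sg (JTm D (tapp f (sel ix as_)) (psubst (OV G) as_ U)).

Definition is_morph (Sg : signature) (D G : ctx) (as_ : seq term) : Prop :=
  J Sg (JCtx D) /\ J Sg (JCtx G) /\ size as_ = size G /\
  (forall k a x A, onth as_ k = Some a -> onth G k = Some (x, A) ->
      J Sg (JTm D a (psubst (take k (OV G)) (take k as_) A))).

Definition is_signature (Sg : signature) : Prop :=
  (forall S0 G ix, sdecl Sg S0 = Some (G, ix) ->
     is_precontext G /\ determining G ix /\ J Sg (JCtx G)) /\
  (forall f G ix U, fdecl Sg f = Some (G, ix, U) ->
     is_precontext G /\ determining G ix /\ {subset ptvars U <= ctx_vars G} /\
     J Sg (JCtx G) /\ J Sg (JTy G U)).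

Definition F_ob (Sg : signature) (G : ctx) : Prop := J Sg (JCtx G).
Definition F_ty (Sg : signature) (G : ctx) (A : pretype) : Prop := J Sg (JTy G A).
(* (D,G,as) o (E,D,bs) = (E,G,as[bs/D]) *)
Definition F_comp (D : ctx) (as_ bs : seq term) : seq term := map (tsubst (OV D) bs) as_.
(* (G,A){(D,G,as)} = (D, A[as/G]) *)
Definition F_tysub (G : ctx) (as_ : seq term) (A : pretype) : pretype := psubst (OV G) as_ A.
Definition F_ext (G : ctx) (A : pretype) : ctx := rcons G (fresh G, A).
(* p(G,A) = (G.A, G, OV(G)), as a list of terms *)
Definition F_p (G : ctx) : seq term := idm G.
(* f.S = < f o p(S{f}), v_{S{f}} > for f = (D,G,as), S = (G,A) :
   a morphism F_ext D (F_tysub G as A) -> F_ext G A *)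
Definition F_q (D G : ctx) (as_ : seq term) (A : pretype) : seq term :=
  rcons (F_comp D as_ (F_p D)) (tvar (fresh D)).

Definition psig := Psym L -> option (ctx * seq nat).

Definition is_psig (Sg : signature) (Pi : psig) : Prop :=
  forall R G ix, Pi R = Some (G, ix) -> J Sg (JCtx G) /\ determining G ix.

Inductive form : Type :=
| FPred (R : Psym L) (args : seq term)
| FBot | FTop
| FAnd (p q : form) | FOr (p q : form) | FImp (p q : form)
| FAll (x : V L) (A : pretype) (p : form)
| FEx (x : V L) (A : pretype) (p : form).

Inductive form_j (Sg : signature) (Pi : psig) : ctx -> form -> Prop :=
| FJpred R G ix D as_ : Pi R = Some (G, ix) -> is_morph Sg D G as_ ->
    form_j Sg Pi D (FPred R (sel ix as_))
| FJbot G : J Sg (JCtx G) -> form_j Sg Pi G FBot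
| FJtop G : J Sg (JCtx G) -> form_j Sg Pi G FTop
| FJand G p q : form_j Sg Pi G p -> form_j Sg Pi G q -> form_j Sg Pi G (FAnd p q)
| FJor G p q : form_j Sg Pi G p -> form_j Sg Pi G q -> form_j Sg Pi G (FOr p q)
| FJimp G p q : form_j Sg Pi G p -> form_j Sg Pi G q -> form_j Sg Pi G (FImp p q)
| FJall G x A p : J Sg (JTy G A) -> form_j Sg Pi (rcons G (x, A)) p -> form_j Sg Pi G (FAll x A p)
| FJex G x A p : J Sg (JTy G A) -> form_j Sg Pi (rcons G (x, A)) p -> form_j Sg Pi G (FEx x A p).

Fixpoint fsubst (D G : ctx) (as_ : seq term) (p : form) : form :=
  match p with
  | FPred R ts => FPred R (map (tsubst (OV G) as_) ts)
  | FBot => FBot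
  | FTop => FTop
  | FAnd p q => FAnd (fsubst D G as_ p) (fsubst D G as_ q)
  | FOr p q => FOr (fsubst D G as_ p) (fsubst D G as_ q)
  | FImp p q => FImp (fsubst D G as_ p) (fsubst D G as_ q)
  | FAll x A th =>
      let A' := psubst (OV G) as_ A in let y := fresh D in
      FAll y A' (fsubst (rcons D (y, A')) (rcons G (x, A)) (rcons as_ (tvar y)) th)
  | FEx x A th =>
      let A' := psubst (OV G) as_ A in let y := fresh D in
      FEx y A' (fsubst (rcons D (y, A')) (rcons G (x, A)) (rcons as_ (tvar y)) th)
  end.

Definition wk (G : ctx) (x : V L) (A : pretype) (p : form) : form :=
  fsubst (rcons G (x, A)) G (idm G) p.

(* a theory: a set of sequents  p =>_G q *)
Definition theory := ctx -> form -> form -> Prop.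

Definition is_theory (Sg : signature) (Pi : psig) (T : theory) : Prop :=
  forall G p q, T G p q -> form_j Sg Pi G p /\ form_j Sg Pi G q.

Inductive thm (Sg : signature) (Pi : psig) (T : theory) : ctx -> form -> form -> Prop :=
| Tax G p q : T G p q -> thm Sg Pi T G p q
| Trefl G p : form_j Sg Pi G p -> thm Sg Pi T G p p
| Tcut G p th q : thm Sg Pi T G p th -> thm Sg Pi T G th q -> thm Sg Pi T G p q
| TandE1 G th q : form_j Sg Pi G th -> form_j Sg Pi G q -> thm Sg Pi T G (FAnd th q) th
| TandE2 G th q : form_j Sg Pi G th -> form_j Sg Pi G q -> thm Sg Pi T G (FAnd th q) q
| TandI G p th q : thm Sg Pi T G p th -> thm Sg Pi T G p q -> thm Sg Pi T G p (FAnd th q)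
| Ttop G p : form_j Sg Pi G p -> thm Sg Pi T G p FTop
| TorI1 G th q : form_j Sg Pi G th -> form_j Sg Pi G q -> thm Sg Pi T G th (FOr th q)
| TorI2 G th q : form_j Sg Pi G th -> form_j Sg Pi G q -> thm Sg Pi T G q (FOr th q)
| TorE G th q p : thm Sg Pi T G th p -> thm Sg Pi T G q p -> thm Sg Pi T G (FOr th q) p
| Tbot G p : form_j Sg Pi G p -> thm Sg Pi T G FBot p
| TimpI G th q p : thm Sg Pi T G (FAnd th q) p -> thm Sg Pi T G th (FImp q p)
| TimpE G th q p : thm Sg Pi T G th (FImp q p) -> thm Sg Pi T G (FAnd th q) p
| TallI G x A p q : form_j Sg Pi G p -> form_j Sg Pi (rcons G (x, A)) q ->
    thm Sg Pi T (rcons G (x, A)) (wk G x A p) q -> thm Sg Pi T G p (FAll x A q)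
| TallE G x A p q : thm Sg Pi T G p (FAll x A q) -> thm Sg Pi T (rcons G (x, A)) (wk G x A p) q
| TexE G x A q p : form_j Sg Pi G p -> form_j Sg Pi (rcons G (x, A)) q ->
    thm Sg Pi T (rcons G (x, A)) q (wk G x A p) -> thm Sg Pi T G (FEx x A q) p
| TexI G x A q p : thm Sg Pi T G (FEx x A q) p -> thm Sg Pi T (rcons G (x, A)) q (wk G x A p)
| Tsubst G D as_ p q : thm Sg Pi T G p q -> is_morph Sg D G as_ ->
    thm Sg Pi T D (fsubst D G as_ p) (fsubst D G as_ q).

End Syntax.

Record heyting_ops (X : Type) := HOps {
  hle : X -> X -> Prop;
  htop : X; hbot : X;
  hmeet : X -> X -> X; hjoin : X -> X -> X; himp : X -> X -> X
}.

Definition is_heyting_prealgebra (X : Type) (P : X -> Prop) (H : heyting_ops X) : Prop :=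
  P (htop H) /\ P (hbot H) /\
  (forall x y, P x -> P y -> P (hmeet H x y) /\ P (hjoin H x y) /\ P (himp H x y)) /\
  (forall x, P x -> hle H x x) /\
  (forall x y z, P x -> P y -> P z -> hle H x y -> hle H y z -> hle H x z) /\
  (forall x, P x -> hle H (hbot H) x /\ hle H x (htop H)) /\
  (forall x y z, P x -> P y -> P z -> (hle H z (hmeet H x y) <-> hle H z x /\ hle H z y)) /\
  (forall x y z, P x -> P y -> P z -> (hle H (hjoin H x y) z <-> hle H x z /\ hle H y z)) /\
  (forall x y z, P x -> P y -> P z -> (hle H z (himp H x y) <-> hle H (hmeet H z x) y)).

Definition is_heyting_mor (X Y : Type) (P : X -> Prop) (H : heyting_ops X)
    (Q : Y -> Prop) (K : heyting_ops Y) (f : X -> Y) : Prop :=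
  (forall x, P x -> Q (f x)) /\
  (forall x y, P x -> P y -> hle H x y -> hle K (f x) (f y)) /\
  f (htop H) = htop K /\ f (hbot H) = hbot K /\
  (forall x y, P x -> P y ->
     f (hmeet H x y) = hmeet K (f x) (f y) /\ f (hjoin H x y) = hjoin K (f x) (f y) /\
     f (himp H x y) = himp K (f x) (f y)).

(* data (Pr, forall, exists) over the cwf F_Sigma; elements of Pr(G) are
   represented by X-values satisfying pr_car G (the tag G being implicit). *)
Record pr_struct (L : lang) (X : Type) := PrStruct {
  pr_car : ctx L -> X -> Prop;
  pr_ops : ctx L -> heyting_ops X;
  pr_map : ctx L -> ctx L -> seq (term L) -> X -> X;
  pr_all : ctx L -> pretype L -> X -> X;
  pr_ex  : ctx L -> pretype L -> X -> X
}.

Definition is_fo_hyperdoctrine (L : lang) (X : Type) (Sg : signature L)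
    (H : pr_struct L X) : Prop :=
  let car := pr_car H in let le G := hle (pr_ops H G) in let pm := pr_map H in
  (forall G, F_ob Sg G -> is_heyting_prealgebra (car G) (pr_ops H G)) /\
  (forall D G as_, is_morph Sg D G as_ ->
     is_heyting_mor (car G) (pr_ops H G) (car D) (pr_ops H D) (pm D G as_)) /\
  (forall G, F_ob Sg G -> forall x, car G x -> pm G G (idm G) x = x) /\
  (forall E D G as_ bs, is_morph Sg D G as_ -> is_morph Sg E D bs ->
     forall x, car G x -> pm E G (F_comp D as_ bs) x = pm E D bs (pm D G as_ x)) /\
  (forall G A, F_ob Sg G -> F_ty Sg G A ->
     (forall R, car (F_ext G A) R -> car G (pr_all H G A R) /\ car G (pr_ex H G A R)) /\
     (forall R R', car (F_ext G A) R -> car (F_ext G A) R' -> le (F_ext G A) R R' ->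
        le G (pr_all H G A R) (pr_all H G A R') /\ le G (pr_ex H G A R) (pr_ex H G A R')) /\
     (forall Q R, car G Q -> car (F_ext G A) R ->
        (le G Q (pr_all H G A R) <-> le (F_ext G A) (pm (F_ext G A) G (F_p G) Q) R) /\
        (le G (pr_ex H G A R) Q <-> le (F_ext G A) R (pm (F_ext G A) G (F_p G) Q)))) /\
  (forall D G as_ A, is_morph Sg D G as_ -> F_ty Sg G A ->
     forall R, car (F_ext G A) R ->
       pm D G as_ (pr_all H G A R) =
         pr_all H D (F_tysub G as_ A)
           (pm (F_ext D (F_tysub G as_ A)) (F_ext G A) (F_q D G as_ A) R) /\
       pm D G as_ (pr_ex H G A R) =
         pr_ex H D (F_tysub G as_ A)
           (pm (F_ext D (F_tysub G as_ A)) (F_ext G A) (F_q D G as_ A) R)).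

Definition LT (L : lang) (Sg : signature L) (Pi : psig L) (T : theory L) :
    pr_struct L (form L) :=
  {| pr_car := form_j Sg Pi;
     pr_ops := fun G => HOps (thm Sg Pi T G) (@FTop L) (@FBot L) (@FAnd L) (@FOr L) (@FImp L);
     pr_map := fun D G as_ p => fsubst D G as_ p;
     pr_all := fun G A p => FAll (fresh G) A p;
     pr_ex  := fun G A p => FEx (fresh G) A p |}.

From mathcomp Require Import all_boot.
Set Implicit Arguments. Unset Strict Implicit. Unset Printing Implicit Defensive.

(** The order on [Pr(G)] is derivability, so the universal model property is
    immediate, and the rules of [thm] are literally the adjunctions defining a
    Heyting prealgebra and the quantifiers [exists -| weakening -| forall].  The
    content is syntactic: substitution along a context morphism preserves
    derivable judgements and well-formed formulas, and it is strictly functorial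
    on well-formed formulas.  At a binder, strictness needs the de Bruijn
    property: the bound variable of a well-formed quantified formula over [G] is
    then forced to be [fresh G], the very variable that capture-avoiding
    substitution introduces.  Beck-Chevalley holds on the nose, because
    substitution under a binder is by definition along the lifted morphism [f.S]. *)

Lemma onth_size_eq (A B : Type) (s : seq A) (t : seq B) k a :
  size s = size t -> onth s k = Some a -> exists b, onth t k = Some b.
Proof.
move=> eq_size sk; have : k < size t by rewrite -eq_size -onthTE sk.
by rewrite -onthTE; case: onth => // b _; exists b.
Qed.

Lemma onth_sel (X : Type) ix (s : seq X) k a :
  onth (sel ix s) k = Some a -> exists k', onth s k' = Some a.
Proof.
elim: ix k => [|i ix IH] k; first by rewrite /sel onth0n.
rewrite /sel /=; case si: (onth s i) => [b|] /=; last exact: IH.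
by case: k => [[<-]|k]; [exists i | exact: IH].
Qed.

Lemma map_sel (X Y : Type) (f : X -> Y) ix s : map f (sel ix s) = sel ix (map f s).
Proof.
rewrite /sel; elim: ix => [|i ix IH] //=.
by rewrite onth_map; case: (onth s i) => [b|] //=; rewrite IH.
Qed.

Lemma onth_rcons (X : Type) (s : seq X) e k :
  onth (rcons s e) k =
    if k < size s then onth s k else if k == size s then Some e else None.
Proof.
rewrite -cats1 onth_cat; case: ltnP => // le_s_k.
case: eqP => [->|/eqP ne_k_s]; first by rewrite subnn.
by rewrite onth_default // subn_gt0 ltn_neqAle eq_sym ne_k_s.
Qed.

Lemma take_rcons_le (X : Type) (s : seq X) e k :
  k <= size s -> take k (rcons s e) = take k s.
Proof. by move=> le_k_s; rewrite -cats1 takel_cat. Qed.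

Lemma take_rcons_size (X : Type) (s : seq X) e : take (size s) (rcons s e) = s.
Proof. by rewrite -cats1 take_size_cat. Qed.

Section Substitution.
Variable L : lang.
Notation term := (term L).
Notation V := (V L).

Fixpoint All (P : term -> Prop) (s : seq term) : Prop :=
  if s is t :: s' then P t /\ All P s' else True.

Lemma All_of (P : term -> Prop) ts : (forall t, P t) -> All P ts.
Proof. by move=> H; elim: ts => //= t ts ->; split. Qed.

(* [tapp] takes a [seq term], so the induction principle generated for [term]
   has no hypothesis on its arguments. *)
Section TermInd.
Variable P : term -> Prop.
Hypothesis Pvar : forall x, P (tvar x).
Hypothesis Papp : forall f ts, All P ts -> P (tapp f ts).

Fixpoint term_nested_ind t : P t :=
  match t with
  | tvar x => Pvar x
  | tapp f ts => Papp f ((fix go ts : All P ts :=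
       if ts is t :: ts' then conj (term_nested_ind t) (go ts') else I) ts)
  end.
End TermInd.

Lemma tvars_tapp f ts : tvars (tapp f ts) = flatten (map (@tvars L) ts).
Proof. by elim: ts => //= t ts IH; rewrite -IH. Qed.

Lemma eq_map_All (f g : term -> term) ts :
  All (fun t => f t = g t) ts -> map f ts = map g ts.
Proof. by elim: ts => //= t ts IH [-> /IH ->]. Qed.

Lemma eq_in_map_All (X : seq V) (f g : term -> term) ts :
  All (fun t => {subset tvars t <= X} -> f t = g t) ts ->
  {subset flatten (map (@tvars L) ts) <= X} -> map f ts = map g ts.
Proof.
elim: ts => //= t ts IH [fg_t fg_ts] sub.
by rewrite fg_t ?IH // => y y_in; apply: sub; rewrite mem_cat y_in ?orbT.
Qed.

Lemma eq_map_tvars_sub (X : seq V) (f g : term -> term) ts :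
  (forall t, {subset tvars t <= X} -> f t = g t) ->
  {subset flatten (map (@tvars L) ts) <= X} -> map f ts = map g ts.
Proof. by move=> fg; apply/eq_in_map_All/All_of. Qed.

Lemma tsubst_id (xs : seq V) t : tsubst xs (map (@tvar L) xs) t = t.
Proof.
elim/term_nested_ind: t => [x|f ts IH] /=.
  by case: ifP => // x_in; rewrite (nth_map x) ?index_mem ?nth_index.
by congr tapp; rewrite -[RHS]map_id (eq_map_All IH).
Qed.

Lemma tsubst_eq_in (X : seq V) xs as_ ys bs t :
  {in X, forall x, tsubst xs as_ (tvar x) = tsubst ys bs (tvar x)} ->
  {subset tvars t <= X} -> tsubst xs as_ t = tsubst ys bs t.
Proof.
move=> agree; elim/term_nested_ind: t => [x|f ts IH] sub.
  by apply: agree; apply: sub; rewrite inE.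
by rewrite /= (eq_in_map_All IH) // -(tvars_tapp f).
Qed.

Lemma tsubst_comp (xs ys : seq V) bs cs t :
  size bs = size xs -> {subset tvars t <= xs} ->
  tsubst xs (map (tsubst ys cs) bs) t = tsubst ys cs (tsubst xs bs t).
Proof.
move=> size_bs; elim/term_nested_ind: t => [x|f ts IH] /= sub.
  have x_in : x \in xs by apply: sub; rewrite inE.
  by rewrite x_in (nth_map (tvar x)) // size_bs index_mem.
by rewrite -map_comp (eq_in_map_All IH) // -(tvars_tapp f).
Qed.

Lemma tsubst_take i (xs : seq V) as_ t : {subset tvars t <= take i xs} ->
  tsubst (take i xs) (take i as_) t = tsubst xs as_ t.
Proof.
apply: tsubst_eq_in => x x_in /=; rewrite x_in (mem_take x_in).
have index_take : index x (take i xs) = index x xs.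
  by rewrite -{2}(cat_take_drop i xs) index_cat x_in.
have lt_index_i : index x (take i xs) < i.
  by rewrite (leq_trans _ (geq_minl i (size xs))) // -size_take_min index_mem.
by rewrite nth_take // index_take.
Qed.

Lemma tsubst_rcons (xs : seq V) z bs b t :
  size bs = size xs -> {subset tvars t <= xs} ->
  tsubst (rcons xs z) (rcons bs b) t = tsubst xs bs t.
Proof.
move=> size_bs; apply: tsubst_eq_in => x x_in /=.
by rewrite mem_rcons inE x_in orbT -!cats1 index_cat x_in nth_cat size_bs index_mem x_in.
Qed.

Lemma map_tsubst_id (xs : seq V) ts : map (tsubst xs (map (@tvar L) xs)) ts = ts.
Proof. by rewrite -[RHS]map_id; apply/eq_map_All/All_of => t; apply: tsubst_id. Qed.

Lemma map_tsubst_comp (xs ys : seq V) bs cs ts :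
  size bs = size xs -> {subset flatten (map (@tvars L) ts) <= xs} ->
  map (tsubst xs (map (tsubst ys cs) bs)) ts = map (tsubst ys cs) (map (tsubst xs bs) ts).
Proof.
by move=> size_bs; rewrite -map_comp; apply: eq_map_tvars_sub => t; apply: tsubst_comp.
Qed.

Lemma map_tsubst_rcons (xs : seq V) z bs b ts :
  size bs = size xs -> {subset flatten (map (@tvars L) ts) <= xs} ->
  map (tsubst (rcons xs z) (rcons bs b)) ts = map (tsubst xs bs) ts.
Proof. by move=> size_bs; apply: eq_map_tvars_sub => t; apply: tsubst_rcons. Qed.

Lemma psubst_id (xs : seq V) A : psubst xs (map (@tvar L) xs) A = A.
Proof. by case: A => S ts /=; rewrite map_tsubst_id. Qed.

Lemma psubst_comp (xs ys : seq V) bs cs A :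
  size bs = size xs -> {subset ptvars A <= xs} ->
  psubst xs (map (tsubst ys cs) bs) A = psubst ys cs (psubst xs bs A).
Proof. by case: A => S ts size_bs sub /=; rewrite map_tsubst_comp. Qed.

Lemma psubst_take i (xs : seq V) as_ A : {subset ptvars A <= take i xs} ->
  psubst (take i xs) (take i as_) A = psubst xs as_ A.
Proof.
by case: A => S ts sub /=; congr ptype; apply: eq_map_tvars_sub sub => t; apply: tsubst_take.
Qed.

End Substitution.

Section Contexts.
Variable L : lang.
Notation term := (term L).
Notation ctx := (ctx L).

Lemma flatten_tvars_sub (s : seq term) (X : seq (V L)) :
  (forall k a, onth s k = Some a -> {subset tvars a <= X}) ->
  {subset flatten (map (@tvars L) s) <= X}.
Proof.
elim: s => [|t s IH] sub y //=; rewrite mem_cat => /orP [y_in|y_in].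
  exact: (sub 0 t).
by apply: (IH _ y y_in) => k a; apply: (sub k.+1).
Qed.

Lemma flatten_tvars_sel_sub ix (s : seq term) (X : seq (V L)) :
  (forall k a, onth s k = Some a -> {subset tvars a <= X}) ->
  {subset flatten (map (@tvars L) (sel ix s)) <= X}.
Proof.
move=> sub; apply: flatten_tvars_sub => k a ska.
have [k' sk'] := onth_sel ska; exact: sub sk'.
Qed.

Lemma mem_OV (G : ctx) i x A : onth G i = Some (x, A) -> x \in OV G.
Proof. by move=> Gi; apply/onthP; exists i; rewrite /OV onth_map Gi. Qed.

Lemma OV_sub_ctx_vars (G : ctx) : {subset OV G <= ctx_vars G}.
Proof.
elim: G => [|[x A] G IH] y //=; rewrite !inE => /orP [->//|/IH y_in].
by rewrite mem_cat y_in !orbT.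
Qed.

Lemma OV_rcons (G : ctx) x A : OV (rcons G (x, A)) = rcons (OV G) x.
Proof. by rewrite /OV map_rcons. Qed.

(* Strict functoriality of substitution depends only on lengths and scoping,
   not on typing. *)
Definition is_premorph (D G : ctx) (as_ : seq term) : Prop :=
  size as_ = size G /\ {subset flatten (map (@tvars L) as_) <= OV D}.

Lemma is_premorph_lift D G as_ y B x A : is_premorph D G as_ ->
  is_premorph (rcons D (y, B)) (rcons G (x, A)) (rcons as_ (tvar y)).
Proof.
move=> [size_as sub]; split; first by rewrite !size_rcons size_as.
rewrite map_rcons flatten_rcons OV_rcons => z; rewrite mem_cat mem_rcons !inE.
by case/orP => [/sub ->|->]; rewrite ?orbT.
Qed.

Lemma F_comp_lift D G as_ bs y B b : y \notin OV D -> is_premorph D G as_ ->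
  size bs = size D ->
  F_comp (rcons D (y, B)) (rcons as_ (tvar y)) (rcons bs b) = rcons (F_comp D as_ bs) b.
Proof.
move=> y_fresh [_ sub] size_bs.
rewrite /F_comp OV_rcons map_rcons map_tsubst_rcons ?size_map //=.
rewrite mem_rcons inE eqxx /= -!cats1 index_cat (negbTE y_fresh) /= eqxx addn0.
by rewrite nth_cat size_map size_bs ltnn subnn.
Qed.

Section Freshness.
Hypothesis FP : fresh_provider L.

Lemma Fresh_notin_OV (G : ctx) x : Fresh G x -> x \notin OV G.
Proof. by case: FP => _ [_ [notin _]] /notin; apply: contra; apply: OV_sub_ctx_vars. Qed.

Lemma Fresh_fresh (G : ctx) : Fresh G (fresh G).
Proof. by case: FP => _ [_ [_ fr_in]]; apply: fr_in. Qed.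

Lemma fresh_notin_OV (G : ctx) : fresh G \notin OV G.
Proof. exact/Fresh_notin_OV/Fresh_fresh. Qed.

End Freshness.
End Contexts.

Section Judgements.
Variable L : lang.
Notation term := (term L).
Notation ctx := (ctx L).
Variable Sg : signature L.

Definition judg_scoped (j : judg L) : Prop :=
  match j with
  | JCtx _ => True
  | JTy G A => {subset ptvars A <= OV G}
  | JTm G a _ => {subset tvars a <= OV G}
  end.

Lemma J_scoped j : J Sg j -> judg_scoped j.
Proof.
elim => //=.
- by move=> G i x A _ _ Gi y; rewrite inE => /eqP ->; exact: mem_OV Gi.
- move=> S0 G ix D as_ _ _ _ _ _ size_as _ IH.
  apply: flatten_tvars_sel_sub => k a ak.
  have [[x A] Gk] := onth_size_eq size_as ak; exact: IH ak Gk.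
- move=> f G ix U D as_ _ _ _ _ _ size_as _ IH _ _.
  change {subset tvars (tapp f (sel ix as_)) <= OV D}.
  rewrite tvars_tapp; apply: flatten_tvars_sel_sub => k a ak.
  have [[x A] Gk] := onth_size_eq size_as ak; exact: IH ak Gk.
Qed.

Lemma J_ty_vars G A : J Sg (JTy G A) -> {subset ptvars A <= OV G}.
Proof. exact: (@J_scoped (JTy G A)). Qed.

Lemma J_tm_vars G a A : J Sg (JTm G a A) -> {subset tvars a <= OV G}.
Proof. exact: (@J_scoped (JTm G a A)). Qed.

Lemma J_ty_ctx G A : J Sg (JTy G A) -> J Sg (JCtx G).
Proof.
have : forall j, J Sg j -> if j is JTy G A then J Sg (JCtx G) else True by move=> j [].
by move=> ty_ctx /ty_ctx.
Qed.

Lemma J_ctx_entry G k x A : J Sg (JCtx G) -> onth G k = Some (x, A) ->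
  [/\ J Sg (JCtx (take k G)), J Sg (JTy (take k G) A) & Fresh (take k G) x].
Proof.
have : forall j, J Sg j -> if j is JCtx G0 then forall i y B, onth G0 i = Some (y, B) ->
    [/\ J Sg (JCtx (take i G0)), J Sg (JTy (take i G0) B) & Fresh (take i G0) y] else True.
  move=> j; elim=> // [i y B|G0 B0 y0 G0_ctx IH B0_ty _ y0_fresh i y B].
    by rewrite onth0n.
  rewrite onth_rcons; case: ltnP => [lt_i|le_i].
    by rewrite take_rcons_le ?(ltnW lt_i) //; apply: IH.
  by case: eqP => // -> [<- <-]; rewrite take_rcons_size.
by move=> entry /entry; apply.
Qed.

Lemma J_ctx_entry_vars G k x A : J Sg (JCtx G) -> onth G k = Some (x, A) ->
  {subset ptvars A <= take k (OV G)}.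
Proof.
by move=> G_ctx /(J_ctx_entry G_ctx) [_ A_ty _]; rewrite /OV -map_take; apply: J_ty_vars.
Qed.

Lemma J_rcons G x A : J Sg (JCtx (rcons G (x, A))) ->
  [/\ J Sg (JCtx G), J Sg (JTy G A) & Fresh G x].
Proof.
move=> /(@J_ctx_entry _ (size G) x A).
by rewrite onth_rcons ltnn eqxx take_rcons_size; apply.
Qed.

Lemma is_morph_vars D G as_ k a : is_morph Sg D G as_ -> onth as_ k = Some a ->
  {subset tvars a <= OV D}.
Proof.
move=> [_ [_ [size_as as_ty]]] ak.
have [[x A] Gk] := onth_size_eq size_as ak; exact: J_tm_vars (as_ty _ _ _ _ ak Gk).
Qed.

Lemma is_morph_premorph D G as_ : is_morph Sg D G as_ -> is_premorph D G as_.
Proof.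
move=> m; split; first by case: m => _ [_ []].
by apply: flatten_tvars_sub => k a; apply: is_morph_vars m.
Qed.

Section Substitutivity.
Hypothesis FP : fresh_provider L.
Hypothesis SG : is_signature Sg.

Lemma J_uniq_OV G : J Sg (JCtx G) -> uniq (OV G).
Proof.
have : forall j, J Sg j -> if j is JCtx G0 then is_true (uniq (OV G0)) else True.
  move=> j; elim=> // G0 A x _ uniq_G0 _ _ x_fresh.
  by rewrite OV_rcons rcons_uniq uniq_G0 (Fresh_notin_OV FP).
by move=> uniq_ctx /uniq_ctx.
Qed.

Lemma index_OV (G : ctx) i x A :
  uniq (OV G) -> onth G i = Some (x, A) -> index x (OV G) = i.
Proof.
move=> uniq_G Gi; have lt_i : i < size (OV G) by rewrite size_map -onthTE Gi.
have nth_i : nth x (OV G) i = x by rewrite (onth_nth x x) // /OV onth_map Gi.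
by rewrite -{1}nth_i index_uniq.
Qed.

Lemma is_morph_map D D0 G0 as_ bs : J Sg (JCtx D) -> J Sg (JCtx G0) -> size bs = size G0 ->
  (forall k b x A, onth bs k = Some b -> onth G0 k = Some (x, A) ->
    J Sg (JTm D (tsubst (OV D0) as_ b)
       (psubst (OV D0) as_ (psubst (take k (OV G0)) (take k bs) A)))) ->
  is_morph Sg D G0 (map (tsubst (OV D0) as_) bs).
Proof.
move=> D_ctx G0_ctx size_bs bs_ty; do 3!split=> //; first by rewrite size_map.
move=> k a x A; rewrite onth_map; case bk: (onth bs k) => [b|] //= [<-] G0k.
have lt_k : k < size G0 by rewrite -onthTE G0k.
rewrite -map_take psubst_comp; first exact: bs_ty bk G0k.
  by rewrite !size_takel // ?size_map ?size_bs ltnW.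
exact: J_ctx_entry_vars G0_ctx G0k.
Qed.

Definition judg_subst_closed (j : judg L) : Prop :=
  match j with
  | JCtx _ => True
  | JTy G A => forall D as_, is_morph Sg D G as_ -> J Sg (JTy D (psubst (OV G) as_ A))
  | JTm G a A => forall D as_, is_morph Sg D G as_ ->
      J Sg (JTm D (tsubst (OV G) as_ a) (psubst (OV G) as_ A))
  end.

Lemma J_subst_closed j : J Sg j -> judg_subst_closed j.
Proof.
elim=> //=.
- move=> G i x A G_ctx _ Gi D as_ [D_ctx [_ [size_as as_ty]]].
  rewrite (mem_OV Gi) (index_OV (J_uniq_OV G_ctx) Gi).
  have [a ai] := onth_size_eq (esym size_as) Gi.
  rewrite (onth_nth (tvar x) _ _ _ ai) -(psubst_take (i := i)); first exact: as_ty ai Gi.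
  exact: J_ctx_entry_vars G_ctx Gi.
- move=> S0 G0 ix D0 bs decl _ _ G0_ctx _ size_bs _ IH D as_ m.
  have [_ [_ [size_m m_ty]]] := is_morph_map (D0 := D0) (as_ := as_) m.1 G0_ctx size_bs
    (fun k b x A bk G0k => IH k b x A bk G0k D as_ m).
  by rewrite map_sel; apply: R4 decl m.1 G0_ctx size_m m_ty.
- move=> f G0 ix U D0 bs decl _ _ G0_ctx _ size_bs _ IH _ IHU D as_ m.
  have U_vars : {subset ptvars U <= OV G0}.
    by have [_ [_ [_ [_ U_ty]]]] := SG.2 f G0 ix U decl; apply: J_ty_vars U_ty.
  have [_ [_ [size_m m_ty]]] := is_morph_map (D0 := D0) (as_ := as_) m.1 G0_ctx size_bs
    (fun k b x A bk G0k => IH k b x A bk G0k D as_ m).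
  have := IHU D as_ m; rewrite map_sel -psubst_comp ?size_map // => U_ty.
  exact: R5 decl m.1 G0_ctx size_m m_ty U_ty.
Qed.

Lemma J_subst_ty G A D as_ : J Sg (JTy G A) -> is_morph Sg D G as_ ->
  J Sg (JTy D (psubst (OV G) as_ A)).
Proof. by move/J_subst_closed; apply. Qed.

Lemma J_subst_tm G a A D as_ : J Sg (JTm G a A) -> is_morph Sg D G as_ ->
  J Sg (JTm D (tsubst (OV G) as_ a) (psubst (OV G) as_ A)).
Proof. by move/J_subst_closed; apply. Qed.

Lemma is_morph_proj D y C : J Sg (JCtx (rcons D (y, C))) ->
  is_morph Sg (rcons D (y, C)) D (idm D).
Proof.
move=> DC_ctx; have [D_ctx _ _] := J_rcons DC_ctx.
do 3!split=> //; first by rewrite /idm !size_map.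
move=> k a x A; rewrite /idm /OV !onth_map.
case Dk: (onth D k) => [[x' A']|] //= [<-] [_ <-].
rewrite -[take k (map (@tvar L) _)]map_take psubst_id; apply: (R3 (i := k)) DC_ctx _.
by rewrite onth_rcons -onthTE Dk.
Qed.

Lemma J_weaken D y C a B : J Sg (JCtx (rcons D (y, C))) -> J Sg (JTm D a B) ->
  J Sg (JTm (rcons D (y, C)) a B).
Proof.
by move=> DC_ctx /J_subst_tm /(_ (is_morph_proj DC_ctx)); rewrite /idm tsubst_id psubst_id.
Qed.

Lemma is_morph_lift D G as_ x A : is_morph Sg D G as_ -> J Sg (JCtx (rcons G (x, A))) ->
  is_morph Sg (rcons D (fresh D, psubst (OV G) as_ A)) (rcons G (x, A))
    (rcons as_ (tvar (fresh D))).
Proof.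
move=> m GA_ctx; have [G_ctx A_ty _] := J_rcons GA_ctx.
have DA_ctx := R2 m.1 (J_subst_ty A_ty m) (Fresh_fresh FP D).
case: m => D_ctx [_ [size_as as_ty]].
do 3!split=> //; first by rewrite !size_rcons size_as.
move=> k a y B; rewrite !onth_rcons size_as OV_rcons; case: ltnP => lt_k.
  move=> ak Gk; have le_k : k <= size G by apply: ltnW.
  rewrite !take_rcons_le ?size_map ?size_as //.
  exact: J_weaken DA_ctx (as_ty _ _ _ _ ak Gk).
case: eqP => // -> [<-] [_ <-].
rewrite -{1}(size_map fst G) -size_as !take_rcons_size.
by apply: (R3 (i := size D)) DA_ctx _; rewrite onth_rcons ltnn eqxx.
Qed.

Lemma is_morph_comp E D G as_ bs : is_morph Sg D G as_ -> is_morph Sg E D bs ->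
  is_morph Sg E G (F_comp D as_ bs).
Proof.
move=> [_ [G_ctx [size_as as_ty]]] m; rewrite /F_comp.
apply: is_morph_map m.1 G_ctx size_as _ => k a x A ak Gk.
exact: J_subst_tm (as_ty _ _ _ _ ak Gk) m.
Qed.

End Substitutivity.
End Judgements.

Section Formulas.
Variable L : lang.
Notation ctx := (ctx L).
Variables (Sg : signature L) (Pi : psig L).
Hypothesis FP : fresh_provider L.

Lemma form_j_ctx G phi : form_j Sg Pi G phi -> J Sg (JCtx G).
Proof.
by elim=> [R G0 ix D as_ _ []|G0|G0|G0 p q _ G0_ctx|G0 p q _ G0_ctx|G0 p q _ G0_ctx
  |G0 x A p /J_ty_ctx|G0 x A p /J_ty_ctx].
Qed.

Lemma form_j_subst (SG : is_signature Sg) G phi : form_j Sg Pi G phi ->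
  forall D as_, is_morph Sg D G as_ -> form_j Sg Pi D (fsubst D G as_ phi).
Proof.
elim=> /= [R G0 ix D0 bs decl m|G0 _|G0 _|G0 p q _ IHp _ IHq|G0 p q _ IHp _ IHq
  |G0 p q _ IHp _ IHq|G0 x A p A_ty p_wf IH|G0 x A p A_ty p_wf IH] D as_ m'.
- by rewrite map_sel; apply: FJpred decl (is_morph_comp FP SG m m').
- by apply: FJbot; case: m'.
- by apply: FJtop; case: m'.
- by apply: FJand; [apply: IHp|apply: IHq].
- by apply: FJor; [apply: IHp|apply: IHq].
- by apply: FJimp; [apply: IHp|apply: IHq].
- apply: FJall; first exact: J_subst_ty A_ty m'.
  exact/IH/(is_morph_lift FP SG m' (form_j_ctx p_wf)).
- apply: FJex; first exact: J_subst_ty A_ty m'.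
  exact/IH/(is_morph_lift FP SG m' (form_j_ctx p_wf)).
Qed.

Lemma fsubst_id (DB : de_bruijn L) G phi :
  form_j Sg Pi G phi -> fsubst G G (idm G) phi = phi.
Proof.
elim=> /= [R G0 ix D as_ _ _|||G0 p q _ -> _ ->|G0 p q _ -> _ ->|G0 p q _ -> _ ->
  |G0 x A p _ p_wf IH|G0 x A p _ p_wf IH] //; first by rewrite /idm map_tsubst_id.
all: have [_ _ /DB x_eq] := J_rcons (form_j_ctx p_wf).
all: by rewrite /idm /fresh psubst_id -x_eq -map_rcons -(OV_rcons G0 x A) IH.
Qed.

Lemma fsubst_comp G phi : form_j Sg Pi G phi ->
  forall E D as_ bs, is_premorph D G as_ -> size bs = size D ->
  fsubst E G (F_comp D as_ bs) phi = fsubst E D bs (fsubst D G as_ phi).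
Proof.
elim=> /= [R G0 ix D0 cs _ m|||G0 p q _ IHp _ IHq|G0 p q _ IHp _ IHq|G0 p q _ IHp _ IHq
  |G0 x A p A_ty _ IH|G0 x A p A_ty _ IH] E D as_ bs pm size_bs //.
- rewrite /F_comp map_tsubst_comp ?size_map ?pm.1 //.
  apply: flatten_tvars_sel_sub => k a ak; exact: is_morph_vars m ak.
1-3: by rewrite IHp ?IHq.
all: rewrite /F_comp psubst_comp ?size_map ?pm.1 //; last exact: J_ty_vars A_ty.
all: rewrite -(F_comp_lift (psubst (OV G0) as_ A) _ (fresh_notin_OV FP D) pm size_bs) IH //.
all: by [apply: is_premorph_lift | rewrite !size_rcons size_bs].
Qed.

End Formulas.

Section LindenbaumTarski.
Variable L : lang.
Notation ctx := (ctx L).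
Variables (Sg : signature L) (Pi : psig L) (T : theory L).
Notation LT := (LT Sg Pi T).

Lemma LT_heyting_prealgebra G : J Sg (JCtx G) ->
  is_heyting_prealgebra (form_j Sg Pi G) (pr_ops LT G).
Proof.
move=> G_ctx; split; first exact: FJtop.
split; first exact: FJbot.
split; first by move=> p q p_wf q_wf; split; [|split]; constructor.
split; first exact: Trefl.
split; first by move=> p q r _ _ _; apply: Tcut.
split; first by move=> p p_wf; split; [apply: Tbot | apply: Ttop].
split.
  move=> p q r p_wf q_wf _; split=> [le_r_pq|[le_r_p le_r_q]]; last exact: TandI.
  by split; apply: Tcut le_r_pq _; [apply: TandE1 | apply: TandE2].
split.
  move=> p q r p_wf q_wf _; split=> [le_pq_r|[le_p_r le_q_r]]; last exact: TorE.
  by split; apply: Tcut _ le_pq_r; [apply: TorI1 | apply: TorI2].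
by move=> p q r _ _ _; split; [apply: TimpE | apply: TimpI].
Qed.

Lemma LT_subst_heyting_mor (FP : fresh_provider L) (SG : is_signature Sg) D G as_ :
  is_morph Sg D G as_ ->
  is_heyting_mor (form_j Sg Pi G) (pr_ops LT G) (form_j Sg Pi D) (pr_ops LT D)
    (fsubst D G as_).
Proof.
move=> m; split; first by move=> p /form_j_subst; apply.
split; first by move=> p q _ _ le_pq; apply: Tsubst le_pq m.
by do 3!split.
Qed.

Lemma LT_quantifiers G A : J Sg (JTy G A) ->
  let GA := F_ext G A in let wk := fsubst GA G (F_p G) in
  (forall R, form_j Sg Pi GA R ->
     form_j Sg Pi G (FAll (fresh G) A R) /\ form_j Sg Pi G (FEx (fresh G) A R)) /\
  (forall R R', form_j Sg Pi GA R -> form_j Sg Pi GA R' -> thm Sg Pi T GA R R' ->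
     thm Sg Pi T G (FAll (fresh G) A R) (FAll (fresh G) A R') /\
     thm Sg Pi T G (FEx (fresh G) A R) (FEx (fresh G) A R')) /\
  (forall Q R, form_j Sg Pi G Q -> form_j Sg Pi GA R ->
     (thm Sg Pi T G Q (FAll (fresh G) A R) <-> thm Sg Pi T GA (wk Q) R) /\
     (thm Sg Pi T G (FEx (fresh G) A R) Q <-> thm Sg Pi T GA R (wk Q))).
Proof.
move=> A_ty GA wk.
have quant_wf R : form_j Sg Pi GA R ->
    form_j Sg Pi G (FAll (fresh G) A R) /\ form_j Sg Pi G (FEx (fresh G) A R).
  by move=> R_wf; split; [apply: FJall A_ty R_wf | apply: FJex A_ty R_wf].
have all_adj Q R : form_j Sg Pi G Q -> form_j Sg Pi GA R ->
    thm Sg Pi T G Q (FAll (fresh G) A R) <-> thm Sg Pi T GA (wk Q) R.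
  by move=> Q_wf R_wf; split; [apply: TallE | apply: TallI].
have ex_adj Q R : form_j Sg Pi G Q -> form_j Sg Pi GA R ->
    thm Sg Pi T G (FEx (fresh G) A R) Q <-> thm Sg Pi T GA R (wk Q).
  by move=> Q_wf R_wf; split; [apply: TexI | apply: TexE].
split; first exact: quant_wf.
split; last by move=> Q R Q_wf R_wf; split; [apply: all_adj | apply: ex_adj].
move=> R R' R_wf R'_wf le_RR'.
have [all_wf _] := quant_wf R R_wf; have [_ ex_wf] := quant_wf R' R'_wf.
split.
  by apply/all_adj => //; apply: Tcut le_RR'; apply/all_adj => //; apply: Trefl.
by apply/ex_adj => //; apply: Tcut le_RR' _; apply/ex_adj => //; apply: Trefl.
Qed.

Lemma LT_beck_chevalley D G (as_ : seq (term L)) A R :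
  fsubst D G as_ (FAll (fresh G) A R) =
    FAll (fresh D) (F_tysub G as_ A)
      (fsubst (F_ext D (F_tysub G as_ A)) (F_ext G A) (F_q D G as_ A) R) /\
  fsubst D G as_ (FEx (fresh G) A R) =
    FEx (fresh D) (F_tysub G as_ A)
      (fsubst (F_ext D (F_tysub G as_ A)) (F_ext G A) (F_q D G as_ A) R).
Proof. by rewrite /F_q /F_comp /F_p /idm map_tsubst_id. Qed.

End LindenbaumTarski.

Theorem mainTheorem17 (L : lang) (Sg : signature L) (Pi : psig L) (T : theory L) :
  fresh_provider L -> de_bruijn L ->
  is_signature Sg -> is_psig Sg Pi -> is_theory Sg Pi T ->
  is_fo_hyperdoctrine Sg (LT Sg Pi T) /\
  (forall (G : ctx L) (p q : form L), form_j Sg Pi G p -> form_j Sg Pi G q ->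
     (hle (pr_ops (LT Sg Pi T) G) p q <-> thm Sg Pi T G p q)).
Proof.
move=> FP DB SG _ _; split; last by [].
split; first exact: LT_heyting_prealgebra.
split; first exact: LT_subst_heyting_mor.
split; first by move=> G _; exact: fsubst_id.
split.
  move=> E D G as_ bs m m' p p_wf.
  exact: (fsubst_comp FP p_wf E (is_morph_premorph m) (is_morph_premorph m').1).
split; first by move=> G A _; exact: LT_quantifiers.
by move=> D G as_ A _ _ R _; exact: LT_beck_chevalley.
Qed.
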